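(* Let $T:X\to Y$ be a bijective linear operator between Banach function spaces. Then $T$ is disjointness preserving if and only if $T^{-1}$ satisfies condition $(\beta)$.
   Context: A Banach function space is an order ideal of (equivalence classes of) measurable functions on a measure space equipped with a complete lattice norm; in particular it is a Dedekind complete Banach lattice. For a subset $A$ of a vector lattice $X$, $A^d=\{x\in X: |x|\wedge|a|=0 \text{ for all } a\in A\}$ and $A^{dd}=(A^d)^d$. For $a,b\in X$ we write $a\lhd b$ if $\{a\}^{dd}\subseteq\{b\}^{dd}$. A linear operator $S$ satisfies condition $(\beta)$ if $Sa\lhd Sb$ whenever $a\lhd b$. A linear operator is disjointness preserving if it maps disjoint elements to disjoint elements. *)

From HB Require Import structures.
From mathcomp Require Import all_boot all_order all_algebra.
From mathcomp Require Import all_classical all_reals all_analysis.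
Set Implicit Arguments. Unset Strict Implicit. Unset Printing Implicit Defensive.
Import Order.TTheory GRing.Theory Num.Theory numFieldNormedType.Exports.
Local Open Scope classical_set_scope.
Local Open Scope ring_scope.

(* Elements of L^0(mu) are represented by real measurable functions;
   equality of elements is equality mu-almost everywhere. *)
Section BFS.
Context (d : measure_display) (O : measurableType d) (R : realType)
  (mu : {measure set O -> \bar R}).

Definition aeeq (f g : O -> R) : Prop := {ae mu, forall x, f x = g x}.
Definition aele (f g : O -> R) : Prop := {ae mu, forall x, f x <= g x}.

Definition is_BFS (X : set (O -> R)) (rho : (O -> R) -> R) : Prop :=
  [/\ (forall f, X f -> measurable_fun setT f),
      X (fun=> 0),
      (forall f g, X f -> X g -> X (fun x => f x + g x)),
      (forall (c : R) f, X f -> X (fun x => c * f x)) &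
      (forall f (g : O -> R), X f -> measurable_fun setT g ->
         aele (fun x => `|g x|) (fun x => `|f x|) -> X g)]
  /\
  [/\ (forall f, X f -> 0 <= rho f),
      (forall f, X f -> (rho f = 0 <-> aeeq f (fun=> 0))),
      (forall (c : R) f, X f -> rho (fun x => c * f x) = `|c| * rho f),
      (forall f g, X f -> X g -> rho (fun x => f x + g x) <= rho f + rho g) &
      (forall f g, X f -> X g ->
         aele (fun x => `|f x|) (fun x => `|g x|) -> rho f <= rho g)]
  /\
      (forall u : nat -> O -> R, (forall n, X (u n)) ->
         (forall e : R, 0 < e -> exists N : nat, forall m n, (N <= m)%N -> (N <= n)%N ->
            rho (fun x => u m x - u n x) < e) ->
         exists f, X f /\ (fun n => rho (fun x => u n x - f x)) @ \oo --> (0 : R)).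

Definition disj (f g : O -> R) : Prop :=
  aeeq (fun x => Num.min `|f x| `|g x|) (fun=> 0).

Definition dcompl (X : set (O -> R)) (A : set (O -> R)) : set (O -> R) :=
  [set f | X f /\ forall a, A a -> disj f a].

Definition ddcompl X A := dcompl X (dcompl X A).

Definition lhd (X : set (O -> R)) (a b : O -> R) : Prop :=
  ddcompl X [set a] `<=` ddcompl X [set b].

End BFS.

Section Ops.
Context (d1 d2 : measure_display) (O1 : measurableType d1) (O2 : measurableType d2)
  (R : realType) (mu1 : {measure set O1 -> \bar R}) (mu2 : {measure set O2 -> \bar R}).

Definition is_linop (X : set (O1 -> R)) (Y : set (O2 -> R))
    (T : (O1 -> R) -> (O2 -> R)) : Prop :=
  [/\ (forall f, X f -> Y (T f)),
      (forall f g, X f -> X g -> aeeq mu1 f g -> aeeq mu2 (T f) (T g)),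
      (forall f g, X f -> X g ->
         aeeq mu2 (T (fun x => f x + g x)) (fun y => T f y + T g y)) &
      (forall (c : R) f, X f -> aeeq mu2 (T (fun x => c * f x)) (fun y => c * T f y))].

Definition is_bij (X : set (O1 -> R)) (Y : set (O2 -> R))
    (T : (O1 -> R) -> (O2 -> R)) : Prop :=
  (forall f g, X f -> X g -> aeeq mu2 (T f) (T g) -> aeeq mu1 f g) /\
  (forall g, Y g -> exists f, X f /\ aeeq mu2 (T f) g).

Definition is_inverse (X : set (O1 -> R)) (Y : set (O2 -> R))
    (T : (O1 -> R) -> (O2 -> R)) (S : (O2 -> R) -> (O1 -> R)) : Prop :=
  forall g, Y g -> X (S g) /\ aeeq mu2 (T (S g)) g.

Definition disj_preserving (X : set (O1 -> R)) (T : (O1 -> R) -> (O2 -> R)) : Prop :=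
  forall f g, X f -> X g -> disj mu1 f g -> disj mu2 (T f) (T g).

Definition cond_beta (Y : set (O2 -> R)) (X : set (O1 -> R))
    (S : (O2 -> R) -> (O1 -> R)) : Prop :=
  forall a b, Y a -> Y b -> lhd mu2 Y a b -> lhd mu1 X (S a) (S b).

End Ops.

(* Write S for the inverse of T.  If T preserves disjointness and a <| b, take
   h disjoint from S b and split S a = k + k' along the support of h.  Then k is
   disjoint from S b, so T k is disjoint from b and hence from a = T k + T k';
   as T k is also disjoint from T k', it vanishes, so k = 0 and h is disjoint
   from S a.  Conversely, if S satisfies (beta) and f, g are disjoint, the
   element w = |T f| /\ |T g| satisfies w <| T f and w <| T g, so S w <| f and
   S w <| g; since g is disjoint from f, S w is disjoint from g and therefore
   from itself, so S w = 0 and w = T (S w) = 0. *)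
From HB Require Import structures.
From mathcomp Require Import all_boot all_order all_algebra.
From mathcomp Require Import all_classical all_reals all_analysis.
Import Order.TTheory GRing.Theory Num.Theory numFieldNormedType.Exports.

Set Implicit Arguments.
Unset Strict Implicit.
Unset Printing Implicit Defensive.

Local Open Scope classical_set_scope.
Local Open Scope ring_scope.

Lemma minr_normr_eq0 (R : realDomainType) (a b : R) :
  Num.min `|a| `|b| = 0 <-> a = 0 \/ b = 0.
Proof.
split=> [|[] ->]; last 2 first.
- by rewrite normr0 min_l ?normr_ge0.
- by rewrite normr0 min_r ?normr_ge0.
by case: (leP `|a| `|b|) => _ /normr0_eq0; [left | right].
Qed.

Section Disjointness.
Context (d : measure_display) (O : measurableType d) (R : realType)
  (mu : {measure set O -> \bar R}).
Implicit Types (X : set (O -> R)) (f g h a b : O -> R).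

Lemma aeeq_sym f g : aeeq mu f g -> aeeq mu g f.
Proof. exact: filterS. Qed.

Lemma aeeq_trans f g h : aeeq mu f g -> aeeq mu g h -> aeeq mu f h.
Proof. by apply: filterS2 => x -> ->. Qed.

Lemma disjE f g : disj mu f g <-> {ae mu, forall x, f x = 0 \/ g x = 0}.
Proof. by split; apply: filterS => x /minr_normr_eq0. Qed.

Lemma disj_sym f g : disj mu f g -> disj mu g f.
Proof. by apply: filterS => x; rewrite minC. Qed.

Lemma disj_aeeqr f b b' : aeeq mu b b' -> disj mu f b -> disj mu f b'.
Proof. by apply: filterS2 => x ->. Qed.

Lemma disj_self_aeeq0 f : disj mu f f -> aeeq mu f (fun=> 0).
Proof. by move/disjE; apply: filterS => x []. Qed.

Lemma disj_summand_aeeq0 f g h : aeeq mu h (fun x => f x + g x) ->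
  disj mu f h -> disj mu f g -> aeeq mu f (fun=> 0).
Proof.
move=> hfg /disjE fh /disjE fg; apply: filterS3 hfg fh fg => x -> [] // fgx.
by case=> // gx; rewrite gx addr0 in fgx.
Qed.

Lemma lhdP X a b : X a ->
  lhd mu X a b <-> forall g, X g -> disj mu g b -> disj mu g a.
Proof.
move=> Xa; split=> [ab g Xg gb | ab f [Xf fdd]].
  have [_ addb] : ddcompl mu X [set b] a.
    by apply: ab; split=> // c [_ ca]; apply/disj_sym/ca.
  by apply/disj_sym/addb; split=> // _ ->.
split=> // c [Xc cb]; apply: fdd; split=> // _ ->.
by apply: ab => //; apply: cb.
Qed.

Lemma lhd_zeros X a b : X a -> (forall x, b x = 0 -> a x = 0) -> lhd mu X a b.
Proof.
move=> Xa ba; apply/lhdP => // g _ /disjE gb; apply/disjE.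
by apply: filterS gb => x [->|/ba ->]; [left | right].
Qed.

End Disjointness.

Section Ideal.
Context (d : measure_display) (O : measurableType d) (R : realType)
  (mu : {measure set O -> \bar R}) (X : set (O -> R)).
Implicit Types f g : O -> R.
Hypothesis Xm : forall f, X f -> measurable_fun setT f.
Hypothesis Xsolid : forall f g, X f -> measurable_fun setT g ->
  aele mu (fun x => `|g x|) (fun x => `|f x|) -> X g.

Lemma measurable_support f : X f -> measurable (f @^-1` [set~ 0]).
Proof.
move=> Xf; rewrite -[_ @^-1` _]setTI.
exact: Xm Xf measurableT _ (measurableC (measurable_set1 0)).
Qed.

Lemma ideal_restrict f D : X f -> measurable D -> X (f \_ D).
Proof.
move=> Xf mD; apply: (Xsolid Xf).
  apply/(measurable_restrictT f mD).
  exact: measurable_funS measurableT (subsetT _) (Xm Xf).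
by apply: aeW => x; rewrite /patch; case: ifP; rewrite ?normr0.
Qed.

Lemma ideal_minr_normr f g : X f -> X g -> X (fun x => Num.min `|f x| `|g x|).
Proof.
move=> Xf Xg; apply: (Xsolid Xf).
  by apply: measurable_realfun.measurable_minr;
    apply: measurableT_comp (@measurable_realfun.normr_measurable R setT) (Xm _).
by apply: aeW => x; rewrite ger0_norm ?le_min ?normr_ge0 // ge_min lexx.
Qed.

End Ideal.

Section Operator.
Context (d1 d2 : measure_display) (O1 : measurableType d1) (O2 : measurableType d2)
  (R : realType) (mu1 : {measure set O1 -> \bar R}) (mu2 : {measure set O2 -> \bar R})
  (X : set (O1 -> R)) (Y : set (O2 -> R))
  (T : (O1 -> R) -> (O2 -> R)) (S : (O2 -> R) -> (O1 -> R)).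
Implicit Types (f g : O1 -> R) (a b : O2 -> R).
Hypothesis TL : is_linop mu1 mu2 X Y T.
Hypothesis Tinj : forall f g, X f -> X g -> aeeq mu2 (T f) (T g) -> aeeq mu1 f g.
Hypothesis TS : is_inverse mu2 X Y T S.
Hypothesis X0 : X (fun=> 0).
Hypothesis Xm : forall f, X f -> measurable_fun setT f.
Hypothesis Xsolid : forall f g, X f -> measurable_fun setT g ->
  aele mu1 (fun x => `|g x|) (fun x => `|f x|) -> X g.
Hypothesis Ym : forall a, Y a -> measurable_fun setT a.
Hypothesis Ysolid : forall a b, Y a -> measurable_fun setT b ->
  aele mu2 (fun y => `|b y|) (fun y => `|a y|) -> Y b.

Lemma linop_aeeq0 : aeeq mu2 (T (fun=> 0)) (fun=> 0).
Proof.
have [_ _ _ Tscale] := TL.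
have := Tscale 0 _ X0; under eq_fun do rewrite mul0r.
by apply: filterS => y ->; rewrite mul0r.
Qed.

Lemma inverseK f : X f -> aeeq mu1 (S (T f)) f.
Proof. by have [TXY _ _ _] := TL => Xf; have [XSTf] := TS (TXY _ Xf); apply: Tinj. Qed.

Lemma disj_preserving_cond_beta :
  disj_preserving mu1 mu2 X T -> cond_beta mu1 mu2 Y X S.
Proof.
move=> Tdisj a b Ya Yb ab.
have [TXY _ Tadd _] := TL; have [XSa TSa] := TS Ya; have [XSb TSb] := TS Yb.
move/(lhdP _ _ Ya): ab => ab; apply/lhdP => // h Xh /disjE hSb.
pose D := h @^-1` [set~ 0]; pose k := S a \_ D; pose k' := S a \_ ~` D.
have mD : measurable D := measurable_support Xm Xh.
have Xk : X k := ideal_restrict Xm Xsolid XSa mD.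
have Xk' : X k' := ideal_restrict Xm Xsolid XSa (measurableC mD).
have Sakk' : S a = (fun x => k x + k' x).
  apply/funext => x; rewrite /k /k' /patch in_setC.
  by case: (x \in D); rewrite ?addr0 ?add0r.
have kk' : disj mu1 k k'.
  by apply/disjE/aeW => x; rewrite /k /k' /patch in_setC; case: (x \in D); [right | left].
have kSb : disj mu1 k (S b).
  apply/disjE; apply: filterS hSb => x [hx|->]; last by right.
  by left; rewrite /k /patch memNset // => /(_ hx).
have Tka : disj mu2 (T k) a.
  by apply: ab (TXY _ Xk) _; apply: disj_aeeqr TSb (Tdisj _ _ Xk XSb kSb).
have aTkk' : aeeq mu2 a (fun y => T k y + T k' y).
  by apply: aeeq_trans (aeeq_sym TSa) _; rewrite Sakk'; apply: Tadd.
have k0 : aeeq mu1 k (fun=> 0).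
  apply: Tinj => //; apply: aeeq_trans (aeeq_sym linop_aeeq0).
  exact: disj_summand_aeeq0 aTkk' Tka (Tdisj _ _ Xk Xk' kk').
apply/disjE; apply: filterS k0 => x; have [hx|hx] := pselect (h x = 0).
  by left.
by rewrite /k /patch mem_set //; right.
Qed.

Lemma cond_beta_disj_preserving :
  cond_beta mu1 mu2 Y X S -> disj_preserving mu1 mu2 X T.
Proof.
move=> beta f g Xf Xg fg.
have [TXY Tae _ _] := TL; have [Yu Yv] := (TXY _ Xf, TXY _ Xg).
pose w y := Num.min `|T f y| `|T g y|.
have Yw : Y w := ideal_minr_normr Ym Ysolid Yu Yv.
have [XSw TSw] := TS Yw.
have Swf : lhd mu1 X (S w) (S (T f)).
  apply: (beta _ _ Yw Yu); apply: lhd_zeros Yw _ => y fy.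
  by rewrite /w fy normr0 min_l ?normr_ge0.
have Swg : lhd mu1 X (S w) (S (T g)).
  apply: (beta _ _ Yw Yv); apply: lhd_zeros Yw _ => y gy.
  by rewrite /w gy normr0 min_r ?normr_ge0.
have gSw : disj mu1 g (S w).
  apply: (iffLR (lhdP _ _ XSw) Swf _ Xg).
  exact: disj_aeeqr (aeeq_sym (inverseK Xf)) (disj_sym fg).
have SwSw : disj mu1 (S w) (S w).
  apply: (iffLR (lhdP _ _ XSw) Swg _ XSw).
  exact: disj_aeeqr (aeeq_sym (inverseK Xg)) (disj_sym gSw).
have TSw0 := Tae _ _ XSw X0 (disj_self_aeeq0 SwSw).
exact (aeeq_trans (aeeq_sym TSw) (aeeq_trans TSw0 linop_aeeq0)).
Qed.

End Operator.

Theorem corollary3p5 (R : realType)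
  (d1 : measure_display) (O1 : measurableType d1) (mu1 : {measure set O1 -> \bar R})
  (d2 : measure_display) (O2 : measurableType d2) (mu2 : {measure set O2 -> \bar R})
  (X : set (O1 -> R)) (rhoX : (O1 -> R) -> R)
  (Y : set (O2 -> R)) (rhoY : (O2 -> R) -> R)
  (T : (O1 -> R) -> (O2 -> R)) (Tinv : (O2 -> R) -> (O1 -> R)) :
  is_BFS mu1 X rhoX -> is_BFS mu2 Y rhoY ->
  is_linop mu1 mu2 X Y T -> is_bij mu1 mu2 X Y T ->
  is_inverse mu2 X Y T Tinv ->
  (disj_preserving mu1 mu2 X T <-> cond_beta mu1 mu2 Y X Tinv).
Proof.
move=> [[Xm X0 _ _ Xsolid] _] [[Ym _ _ _ Ysolid] _] TL [Tinj _] TS.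
split.
- exact: disj_preserving_cond_beta.
- exact: cond_beta_disj_preserving.
Qed.
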